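(* Let $G$ be a finite, simple, connected graph with a fixed root $r\in V(G)$. Then every bunch $B$ of any level $n$ satisfies $\max_{p,q\in B} d_G(p,q)\le W(G)+2$.
   Context: The level of $x$ is $\ell(x)=d_G(r,x)$. For $n\ge0$, $R(n)$ is the set of edges $xy$ with $\max\{\ell(x),\ell(y)\}>n$. Blocks of level $n$ are the equivalence classes of the level-$n$ vertices under: $x\sim y$ iff $x=y$ or $x,y$ are joined by a path with all edges in $R(n)$. Bunches of level $n$ are unions of blocks of level $n$ forming the classes of the transitive closure of ''there is an edge of $G$ between the two blocks''. For a root $r'$ and its levels $\ell_{r'}$ and sets $R_{r'}(n)$, write $x\simeq_n y$ if $x,y$ are in the same connected component of $(V(G),R_{r'}(n))$; $W(r')=\max_{n\ge0}\max\{d_G(x,y):\ell_{r'}(x)=\ell_{r'}(y)=n,\ x\simeq_n y\}$, and the cycle width is $W(G)=\max_{r'\in V(G)} W(r')$. *)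

(* A finite simple graph = symmetric irreflexive rel on a finType. *)
From mathcomp Require Import all_boot.
Set Implicit Arguments. Unset Strict Implicit. Unset Printing Implicit Defensive.

Section Defs.
Variables (T : finType) (e : rel T).

Fixpoint reach_within (k : nat) (x y : T) : bool :=
  if k is k'.+1 then (x == y) || [exists z, e x z && reach_within k' z y]
  else x == y.

(* graph distance d_G(x,y): least k with a walk of length k from x to y
   (all distances are < #|T| in a connected graph) *)
Definition gdist (x y : T) : nat := find (fun k => reach_within k x y) (iota 0 #|T|).

Definition level (r x : T) : nat := gdist r x.

Definition Redge (r : T) (n : nat) : rel T :=
  fun x y => e x y && (n < maxn (level r x) (level r y)).

Definition same_block (r : T) (n : nat) (x y : T) : bool :=
  [&& level r x == n, level r y == n & connect (Redge r n) x y].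

Definition block_adj (r : T) (n : nat) : rel T :=
  fun x y => [exists x', exists y', [&& same_block r n x x', same_block r n y y' & e x' y']].

Definition is_bunch (r : T) (n : nat) (B : {set T}) : Prop :=
  exists x, level r x = n /\
    B = [set y | (level r y == n) && connect (block_adj r n) x y].

(* W(r') = max_n max { d(x,y) : l_{r'}(x) = l_{r'}(y) = n, x ~_n y } ;
   here n is instantiated as l_{r'}(x) *)
Definition width_root (r' : T) : nat :=
  \max_(x : T) \max_(y : T | (level r' y == level r' x)
                               && connect (Redge r' (level r' x)) x y) gdist x y.

Definition cycle_width : nat := \max_(r' : T) width_root r'.

End Defs.

(** A vertex [p] of level [n+1] has a neighbour [p'] of level [n], and the edge
    [p'p] lies in [R(n)].  Two blocks of level [n+1] that are adjacent in [G] are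
    joined by an edge whose endpoints both have level [n+1], hence also by an edge
    of [R(n)]; so all vertices of a bunch of level [n+1] lie in one component of
    [R(n)], and so do their parents.  The parents [p'], [q'] of [p], [q] have the
    same level [n], so [d(p',q') <= W(r) <= W(G)] and [d(p,q) <= d(p',q') + 2].
    Bunches of level [0] are just [{r}]. *)

From mathcomp Require Import all_boot.
Set Implicit Arguments. Unset Strict Implicit. Unset Printing Implicit Defensive.

Section Walks.
Variables (T : finType) (e : rel T).

Lemma reach_withinS k x y : reach_within e k x y -> reach_within e k.+1 x y.
Proof.
elim: k x => [|k IH] x /=; first by move=> ->.
case/orP=> [->//|/existsP[z /andP[exz rzy]]].
by apply/orP; right; apply/existsP; exists z; rewrite exz; apply: IH.
Qed.

Lemma reach_within_leq k m x y :
  k <= m -> reach_within e k x y -> reach_within e m x y.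
Proof.
move=> /subnK <-; elim: (m - k) => [//|d IH] rxy.
by rewrite addSn; apply/reach_withinS/IH.
Qed.

Lemma reach_within_cat a b x y z :
  reach_within e a x y -> reach_within e b y z -> reach_within e (a + b) x z.
Proof.
elim: a x => [|a IH] x; first by move/eqP->.
case/orP=> [/eqP-> ryz|/existsP[w /andP[exw rwy]] ryz].
  by apply: reach_within_leq ryz; rewrite leq_addl.
by rewrite addSn /=; apply/orP; right; apply/existsP; exists w; rewrite exw IH.
Qed.

Lemma reach_within_edge x y : e x y -> reach_within e 1 x y.
Proof. by move=> exy /=; apply/orP; right; apply/existsP; exists y; rewrite exy eqxx. Qed.

Lemma reach_within_connect k x y : reach_within e k x y -> connect e x y.
Proof.
elim: k x => [|k IH] x /=; first by move/eqP->.
case/orP=> [/eqP->//|/existsP[z /andP[exz rzy]]].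
exact: connect_trans (connect1 exz) (IH z rzy).
Qed.

Lemma reach_withinSP k x y : reach_within e k.+1 x y ->
  x = y \/ exists2 z, reach_within e k x z & e z y.
Proof.
elim: k x => [|k IH] x /=.
  case/orP=> [/eqP|/existsP[z /andP[exz /eqP <-]]]; first by left.
  by right; exists x.
case/orP=> [/eqP|/existsP[z /andP[exz rzy]]]; first by left.
case: (IH z rzy) => [<-|[w rzw ewy]]; first by right; exists x; rewrite ?eqxx.
by right; exists w => //; apply/orP; right; apply/existsP; exists z; rewrite exz.
Qed.

Lemma reach_within_path x p : path e x p -> reach_within e (size p) x (last x p).
Proof.
elim: p x => [|y p IH] x /=; first by rewrite eqxx.
by case/andP=> exy ep; apply/orP; right; apply/existsP; exists y; rewrite exy IH.
Qed.

Lemma gdist_le k x y : reach_within e k x y -> gdist e x y <= k.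
Proof.
move=> rxy; rewrite leqNgt; apply/negP=> lt_k.
have k_lt : k < #|T|.
  by apply: leq_trans lt_k _; rewrite /gdist -{2}(size_iota 0 #|T|) find_size.
by have := before_find 0 lt_k; rewrite nth_iota // add0n rxy.
Qed.

Lemma gdist_reach x y : connect e x y -> reach_within e (gdist e x y) x y.
Proof.
move=> /connectP[p ep ->]; case: (shortenP ep) => s es uniq_s _.
have size_s : size s < #|T|.
  by move/card_uniqP: uniq_s => /= <-; apply: max_card.
have has_s : has (fun k => reach_within e k x (last x s)) (iota 0 #|T|).
  by apply/hasP; exists (size s); [rewrite mem_iota | apply: reach_within_path].
have := nth_find 0 has_s; rewrite nth_iota ?add0n //.
by rewrite -{2}(size_iota 0 #|T|) -has_find.
Qed.

Lemma gdistxx x : gdist e x x = 0.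
Proof. by apply/eqP; rewrite -leqn0; apply: (@gdist_le 0); rewrite /= eqxx. Qed.

Lemma gdist_eq0 x y : connect e x y -> gdist e x y = 0 -> x = y.
Proof. by move=> cxy d0; have := gdist_reach cxy; rewrite d0 => /eqP. Qed.

Lemma gdist_triangle x y z :
  connect e x y -> connect e y z -> gdist e x z <= gdist e x y + gdist e y z.
Proof. by move=> cxy cyz; apply/gdist_le/reach_within_cat; apply: gdist_reach. Qed.

Lemma gdist_edge x y : e x y -> gdist e x y <= 1.
Proof. by move/reach_within_edge/gdist_le. Qed.

Lemma gdist_le_edges x x' y y' : e x x' -> e y' y -> connect e x' y' ->
  gdist e x y <= (gdist e x' y').+2.
Proof.
move=> exx' ey'y cx'y'; apply: gdist_le.
have := reach_within_cat (reach_within_edge exx')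
          (reach_within_cat (gdist_reach cx'y') (reach_within_edge ey'y)).
by rewrite add1n addn1.
Qed.

Lemma gdist_parent x z n : connect e x z -> gdist e x z = n.+1 ->
  exists2 y, e y z & gdist e x y = n.
Proof.
move=> cxz dxz; have := gdist_reach cxz; rewrite dxz.
case/reach_withinSP=> [xz|[y rxy eyz]]; first by move: dxz; rewrite xz gdistxx.
exists y => //; apply/eqP; rewrite eqn_leq (gdist_le rxy) -ltnS -dxz -addn1.
apply: leq_trans (gdist_triangle (reach_within_connect rxy) (connect1 eyz)) _.
by rewrite leq_add2l gdist_edge.
Qed.

End Walks.

Section Levels.
Variables (T : finType) (e : rel T).

Lemma width_root_ge r' x y : level e r' y = level e r' x ->
  connect (Redge e r' (level e r' x)) x y -> gdist e x y <= width_root e r'.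
Proof.
move=> lxy cxy; rewrite /width_root.
apply: leq_trans (leq_bigmax x); apply: (leq_bigmax_cond (F := gdist e x)).
by rewrite lxy eqxx cxy.
Qed.

Lemma width_root_le_cycle_width r' : width_root e r' <= cycle_width e.
Proof. exact: (leq_bigmax (F := width_root e)). Qed.

Hypothesis e_sym : symmetric e.
Variable r : T.

Lemma Redge_sym n : symmetric (Redge e r n).
Proof. by move=> x y; rewrite /Redge e_sym maxnC. Qed.

Lemma connect_RedgeC n x y : connect (Redge e r n) x y = connect (Redge e r n) y x.
Proof. exact/sym_connect_sym/Redge_sym. Qed.

Lemma connect_Redge_leq m n x y :
  m <= n -> connect (Redge e r n) x y -> connect (Redge e r m) x y.
Proof.
move=> le_mn; apply: connect_sub => a b /andP[eab lt_n]; apply: connect1.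
by rewrite /Redge eab (leq_ltn_trans le_mn lt_n).
Qed.

Lemma Redge_to_level x y n : e x y -> level e r y = n.+1 -> Redge e r n x y.
Proof. by move=> exy ly; rewrite /Redge exy ly leq_maxr. Qed.

Lemma connect_block_adj n x y :
  connect (block_adj e r n.+1) x y -> connect (Redge e r n) x y.
Proof.
have R_Sn := @connect_Redge_leq n n.+1 _ _ (leqnSn n).
apply: connect_sub => a b /existsP[a' /existsP[b' /and3P[ba bb ea'b']]].
case/and3P: ba => _ la' caa'; case/and3P: bb => _ lb' cbb'.
apply: connect_trans (R_Sn _ _ caa') _.
apply: connect_trans (connect1 (Redge_to_level ea'b' (eqP lb'))) _.
by rewrite connect_RedgeC; apply: R_Sn.
Qed.

Hypothesis e_connected : forall x y : T, connect e x y.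

Lemma level_eq0 z : level e r z = 0 -> z = r.
Proof. by move/(gdist_eq0 (e_connected r z)). Qed.

Lemma level_parent z n : level e r z = n.+1 -> exists2 y, e y z & level e r y = n.
Proof. exact: gdist_parent. Qed.

Lemma gdist_le_cycle_width n p q : level e r p = n.+1 -> level e r q = n.+1 ->
  connect (Redge e r n) p q -> gdist e p q <= cycle_width e + 2.
Proof.
move=> lp lq cpq.
have [p' ep'p lp'] := level_parent lp; have [q' eq'q lq'] := level_parent lq.
have cp'q' : connect (Redge e r n) p' q'.
  apply: connect_trans (connect1 (Redge_to_level ep'p lp)) _.
  apply: connect_trans cpq (connect1 _).
  by rewrite Redge_sym; apply: Redge_to_level.
have wp'q' : gdist e p' q' <= cycle_width e.
  apply: leq_trans (width_root_le_cycle_width r).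
  by apply: width_root_ge; rewrite ?lp' ?lq'.
rewrite addn2; apply: leq_trans (gdist_le_edges _ eq'q (e_connected p' q')) _.
  by rewrite e_sym.
by rewrite !ltnS.
Qed.

End Levels.

Theorem mainTheorem13 (T : finType) (e : rel T) (r : T)
  (Hsym : symmetric e) (Hirr : irreflexive e) (Hconn : forall x y : T, connect e x y)
  (n : nat) (B : {set T}) (HB : is_bunch e r n B) :
  forall p q : T, p \in B -> q \in B -> gdist e p q <= cycle_width e + 2.
Proof.
case: HB => x [lx ->] p q; rewrite !inE => /andP[/eqP lp cxp] /andP[/eqP lq cxq].
case: n lx lp lq cxp cxq => [|n] lx lp lq cxp cxq.
  by rewrite (level_eq0 Hconn lp) (level_eq0 Hconn lq) gdistxx.
apply: (gdist_le_cycle_width Hsym Hconn lp lq).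
apply: connect_trans (connect_block_adj Hsym cxq).
by rewrite connect_RedgeC //; apply: connect_block_adj.
Qed.
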